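(* Let $q\ge8$ be even. The $\mathrm{Un}\Gamma$-lines (lines meeting the twisted cubic $\mathcal{C}$ in exactly one point and contained in no osculating plane) form one orbit under $G_q$, namely $\{\ell\varphi:\varphi\in G_q\}$ where $\ell$ is the line through $P_0=P(0,0,0,1)$ and $P(1,0,1,0)$. The subgroup of $G_q$ fixing any $\mathrm{Un}\Gamma$-line is trivial.
   Context: $\mathrm{PG}(3,q)$ has points $P(x_0,x_1,x_2,x_3)$; $\boldsymbol{\pi}(c_0,c_1,c_2,c_3)$ is the plane $c_0x_0+c_1x_1+c_2x_2+c_3x_3=0$. The twisted cubic is $\mathcal{C}=\{P(t^3,t^2,t,1):t\in\mathbb{F}_q\}\cup\{P(1,0,0,0)\}$; the osculating planes are $\boldsymbol{\pi}(1,-3t,3t^2,-t^3)$, $t\in\mathbb{F}_q$, and $\boldsymbol{\pi}(0,0,0,1)$. $G_q$ is the group of projectivities of $\mathrm{PG}(3,q)$ mapping $\mathcal{C}$ to itself. *)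

(* PG(3,q) modelled via row vectors 'rV[F]_4 over a finite field F
   (q = #|F|); points = 1-dim row spaces, lines = rank-2 matrices 'M_(2,4)
   (row space), projectivities = invertible 4x4 matrices acting on the right,
   identified up to nonzero scalars. *)
From HB Require Import structures.
From mathcomp Require Import all_boot all_order all_algebra all_fingroup all_field.
Set Implicit Arguments. Unset Strict Implicit. Unset Printing Implicit Defensive.
Import Order.TTheory GRing.Theory.
Local Open Scope ring_scope.

Section TwistedCubic.
Variable F : finFieldType.

Definition vec4 (a b c d : F) : 'rV[F]_4 :=
  \row_(j < 4) nth 0 [:: a; b; c; d] j.

Definition cpt (u : option F) : 'rV[F]_4 :=
  match u with
  | Some t => vec4 (t ^+ 3) (t ^+ 2) t 1
  | None => vec4 1 0 0 0
  end.

(* coefficient vector of the osculating plane at the point with parameter u: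
   pi(1,-3t,3t^2,-t^3) and pi(0,0,0,1) *)
Definition osc (u : option F) : 'rV[F]_4 :=
  match u with
  | Some t => vec4 1 (- (3%:R * t)) (3%:R * t ^+ 2) (- t ^+ 3)
  | None => vec4 0 0 0 1
  end.

Definition is_line (L : 'M[F]_(2, 4)) : bool := \rank L == 2%N.

Definition line_in_plane (L : 'M[F]_(2, 4)) (c : 'rV[F]_4) : bool :=
  L *m c^T == 0.

Definition UnGamma (L : 'M[F]_(2, 4)) : Prop :=
  [/\ is_line L,
      #|[set u : option F | (cpt u <= L)%MS]| = 1%N
    & forall u : option F, ~~ line_in_plane L (osc u)].

Definition inGq (A : 'M[F]_4) : Prop :=
  [/\ A \in unitmx,
      forall u : option F, exists u' : option F, (cpt u *m A == cpt u')%MS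
    & forall u' : option F, exists u : option F, (cpt u *m A == cpt u')%MS].

Definition ell0 : 'M[F]_(2, 4) :=
  \matrix_(i < 2, j < 4)
     nth 0 (nth [::] [:: [:: 0; 0; 0; 1]; [:: 1; 0; 1; 0]] i) j.

End TwistedCubic.

From HB Require Import structures.
From mathcomp Require Import all_boot all_order all_algebra all_fingroup all_field.
From mathcomp Require Import all_solvable ring.
Import GRing.Theory.
Local Open Scope ring_scope.
Set Implicit Arguments. Unset Strict Implicit.

(* Points (x : y) of PG(1, q) give the points (x^3, x^2 y, x y^2, y^3) of C, and an
   invertible 2x2 matrix acts on C through its third symmetric power [sym3mx].
   These matrices preserve C and its osculating planes, hence the UnGamma-lines.
   Conversely, for q >= 6 every element of G_q is a multiple of one of them: after
   composing with one we may assume that it fixes P(1,0,0,0) and P(0,0,0,1); as C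
   lies on the quadrics x1^2 = x0 x2 and x2^2 = x1 x3, comparing coefficients of
   polynomials of degree at most 5 forces it to be diag(1, e, e^2, e^3) up to scalar.
   In characteristic 2, an UnGamma-line moved through P0 = P(0,0,0,1) meets the plane
   x3 = 0 in a point v with v0 <> 0 (it does not lie in the osculating plane x0 = 0 at
   P0) and delta = v2/v0 - (v1/v0)^2 <> 0 (it meets C only once); squaring being
   bijective, delta = d^2, and sym3mx 1 0 (v1/v0) d maps ell0 onto the line.  Finally
   sym3mx a b c d fixes ell0 only if b = c = 0 and a^2 = d^2, i.e. a = d. *)

Definition i0 : 'I_4 := @Ordinal 4 0 isT.
Definition i1 : 'I_4 := @Ordinal 4 1 isT.
Definition i2 : 'I_4 := @Ordinal 4 2 isT.
Definition i3 : 'I_4 := @Ordinal 4 3 isT.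

Lemma ord4_ind (P : 'I_4 -> Prop) : P i0 -> P i1 -> P i2 -> P i3 -> forall i, P i.
Proof.
move=> P0 P1 P2 P3 [[|[|[|[|//]]]] lti].
all: by rewrite (bool_irrelevance lti isT).
Qed.

Lemma mulmx4E (R : pzSemiRingType) m n (A : 'M[R]_(m, 4)) (B : 'M[R]_(4, n)) i j :
  (A *m B) i j = A i i0 * B i0 j + A i i1 * B i1 j + A i i2 * B i2 j + A i i3 * B i3 j.
Proof.
rewrite mxE !big_ord_recl big_ord0 addr0 !addrA.
have -> : lift ord0 (lift ord0 (lift ord0 ord0)) = i3 :> 'I_4 by apply: val_inj.
have -> : lift ord0 (lift ord0 ord0) = i2 :> 'I_4 by apply: val_inj.
have -> : lift ord0 ord0 = i1 :> 'I_4 by apply: val_inj.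
by have -> : ord0 = i0 :> 'I_4 by apply: val_inj.
Qed.

Ltac rowwise := apply/rowP; apply: ord4_ind; rewrite ?mulmx4E !mxE /=.
Ltac colwise := apply/colP; apply: ord4_ind; rewrite ?mulmx4E !mxE /=.
Ltac entrywise :=
  apply/matrixP; apply: ord4_ind; apply: ord4_ind; rewrite ?mulmx4E !mxE /=.

Lemma adj_det (R : comPzRingType) (a b c d : R) : d * a - (- b) * (- c) = a * d - b * c.
Proof. by ring. Qed.

Lemma det2_mul (R : comPzRingType) (a b c d a' b' c' d' : R) :
  (a' * a + b' * c) * (c' * b + d' * d) - (a' * b + b' * d) * (c' * a + d' * c)
  = (a * d - b * c) * (a' * d' - b' * c').
Proof. by ring. Qed.

Section Sym3.
Variable F : finFieldType.
Implicit Types (a b c d k x y : F).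

Definition cubic_pt x y : 'rV[F]_4 := vec4 (x ^+ 3) (x ^+ 2 * y) (x * y ^+ 2) (y ^+ 3).

Definition osc_coef x y : 'rV[F]_4 :=
  vec4 (y ^+ 3) (- (3%:R * x * y ^+ 2)) (3%:R * x ^+ 2 * y) (- x ^+ 3).

(* The matrix of the substitution (x, y) |-> (a x + b y, c x + d y) acting on
   the monomials x^3, x^2 y, x y^2, y^3 of binary cubic forms. *)
Definition sym3mx a b c d : 'M[F]_4 := \matrix_(i < 4, j < 4) nth 0 (nth [::] [::
  [:: a ^+ 3; a ^+ 2 * c; a * c ^+ 2; c ^+ 3];
  [:: 3%:R * a ^+ 2 * b; a ^+ 2 * d + 2%:R * a * b * c;
      2%:R * a * c * d + b * c ^+ 2; 3%:R * c ^+ 2 * d];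
  [:: 3%:R * a * b ^+ 2; 2%:R * a * b * d + b ^+ 2 * c;
      a * d ^+ 2 + 2%:R * b * c * d; 3%:R * c * d ^+ 2];
  [:: b ^+ 3; b ^+ 2 * d; b * d ^+ 2; d ^+ 3]] i) j.

Lemma cubic_pt_sym3mx x y a b c d :
  cubic_pt x y *m sym3mx a b c d = cubic_pt (a * x + b * y) (c * x + d * y).
Proof. by rowwise; ring. Qed.

Lemma sym3mx_mul a b c d a' b' c' d' :
  sym3mx a b c d *m sym3mx a' b' c' d' =
  sym3mx (a' * a + b' * c) (a' * b + b' * d) (c' * a + d' * c) (c' * b + d' * d).
Proof. by entrywise; ring. Qed.

Lemma sym3mx_scalar k : sym3mx k 0 0 k = (k ^+ 3)%:M.
Proof. by entrywise; ring. Qed.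

Lemma sym3mx_osc a b c d x y :
  sym3mx a b c d *m (osc_coef x y)^T = (osc_coef (x * d - y * b) (y * a - x * c))^T.
Proof. by colwise; ring. Qed.

Lemma sym3mx_mul_adj a b c d :
  sym3mx a b c d *m sym3mx d (- b) (- c) a = ((a * d - b * c) ^+ 3)%:M.
Proof. by rewrite sym3mx_mul -sym3mx_scalar; congr sym3mx; ring. Qed.

Lemma sym3mx_adj_mul a b c d :
  sym3mx d (- b) (- c) a *m sym3mx a b c d = ((a * d - b * c) ^+ 3)%:M.
Proof. by rewrite sym3mx_mul -sym3mx_scalar; congr sym3mx; ring. Qed.

Lemma sym3mx_unit a b c d : a * d - b * c != 0 -> sym3mx a b c d \in unitmx.
Proof.
move=> det_neq0.
have [] // := @mulmx1_unit _ _ (sym3mx a b c d)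
  ((a * d - b * c) ^- 3 *: sym3mx d (- b) (- c) a).
by rewrite -scalemxAr sym3mx_mul_adj scale_scalar_mx mulVf ?expf_neq0.
Qed.

End Sym3.

Section PointsOfC.
Variable F : finFieldType.
Implicit Types (a b c d k t x y : F) (u v : option F).

Definition cpt_coord u : F * F := if u is Some t then (t, 1) else (1, 0).

Definition cpt_of x y : option F := if y == 0 then None else Some (x / y).

Lemma cptE u : cpt u = cubic_pt (cpt_coord u).1 (cpt_coord u).2.
Proof. by case: u => [t|]; rowwise; ring. Qed.

Lemma oscE u :
  osc u = (if u is Some _ then 1 else -1) *: osc_coef (cpt_coord u).1 (cpt_coord u).2.
Proof. by case: u => [t|]; rowwise; ring. Qed.

Lemma cpt_coord_neq0 u : ((cpt_coord u).1 != 0) || ((cpt_coord u).2 != 0).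
Proof. by case: u => [t|] /=; rewrite oner_neq0 ?orbT. Qed.

Lemma cubic_pt_cpt x y : (x != 0) || (y != 0) ->
  exists2 k, k != 0 & cubic_pt x y = k *: cpt (cpt_of x y).
Proof.
rewrite /cpt_of; have [-> | y_neq0] /= := eqVneq y 0 => [|_].
  by rewrite orbF => x_neq0; exists (x ^+ 3); [rewrite expf_neq0 | rowwise; ring].
by exists (y ^+ 3); [rewrite expf_neq0 | rowwise; field].
Qed.

Lemma osc_coef_osc x y : (x != 0) || (y != 0) ->
  exists2 k, k != 0 & osc_coef x y = k *: osc (cpt_of x y).
Proof.
rewrite /cpt_of; have [-> | y_neq0] /= := eqVneq y 0 => [|_].
  rewrite orbF => x_neq0.
  by exists (- x ^+ 3); [rewrite oppr_eq0 expf_neq0 | rowwise; ring].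
by exists (y ^+ 3); [rewrite expf_neq0 | rowwise; field].
Qed.

Lemma cpt_neq0 u : cpt u != 0.
Proof.
apply/eqP => /rowP; case: u => [t|] => [/(_ i3) | /(_ i0)]; rewrite !mxE /=.
  by move/eqP; rewrite oner_eq0.
by move/eqP; rewrite oner_eq0.
Qed.

Lemma cpt_submx_inj u v : (cpt u <= cpt v)%MS -> u = v.
Proof.
case/sub_rVP => k /rowP e; move: (e i3) (e i2) (e i0) => {e}.
case: u => [s|]; case: v => [t|] //; rewrite !mxE /=.
- by move=> /esym; rewrite mulr1 => -> -> _; rewrite mul1r.
- by move=> /eqP; rewrite mulr0 oner_eq0.
- by move=> /esym; rewrite mulr1 => -> _ /eqP; rewrite mul0r oner_eq0.
Qed.

Lemma cpt_coord_cross_neq0 u v : u != v ->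
  (cpt_coord u).1 * (cpt_coord v).2 - (cpt_coord v).1 * (cpt_coord u).2 != 0.
Proof.
case: u v => [s|] [t|] //= s_neq_t.
- by rewrite !mulr1 subr_eq0; apply: contra s_neq_t => /eqP ->.
- by rewrite mulr0 mulr1 sub0r oppr_eq0 oner_neq0.
- by rewrite mul1r mulr0 subr0 oner_neq0.
Qed.

Lemma lin_neq0 a b c d x y : a * d - b * c != 0 -> (x != 0) || (y != 0) ->
  (a * x + b * y != 0) || (c * x + d * y != 0).
Proof.
move=> det_neq0; apply: contraTT; rewrite !negb_or !negbK => /andP[/eqP e1 /eqP e2].
have ex : (a * d - b * c) * x = d * (a * x + b * y) - b * (c * x + d * y) by ring.
have ey : (a * d - b * c) * y = a * (c * x + d * y) - c * (a * x + b * y) by ring.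
rewrite e1 e2 !mulr0 subrr in ex ey.
move/eqP: ex; move/eqP: ey; rewrite !mulf_eq0 (negbTE det_neq0) /=.
by move=> /eqP -> /eqP ->; rewrite eqxx.
Qed.

Definition moebius a b c d u : option F :=
  let: (x, y) := cpt_coord u in cpt_of (a * x + b * y) (c * x + d * y).

Lemma cpt_sym3mx a b c d u : a * d - b * c != 0 ->
  (cpt u *m sym3mx a b c d == cpt (moebius a b c d u))%MS.
Proof.
move=> det_neq0; rewrite /moebius cptE cubic_pt_sym3mx.
case: (cpt_coord u) (cpt_coord_neq0 u) => x y /= /(lin_neq0 det_neq0).
by case/cubic_pt_cpt => k k_neq0 ->; apply/eqmxP/eqmx_scale.
Qed.

Lemma sym3mx_inGq a b c d : a * d - b * c != 0 -> inGq (sym3mx a b c d).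
Proof.
move=> det_neq0; split; first exact: sym3mx_unit.
  by move=> u; exists (moebius a b c d u); apply: cpt_sym3mx.
have adj_neq0 : d * a - (- b) * (- c) != 0 by rewrite adj_det.
move=> u'; exists (moebius d (- b) (- c) a u').
apply/eqmxP; apply: eqmx_trans (eqmxMr _ (eqmx_sym (eqmxP (cpt_sym3mx u' adj_neq0)))) _.
by rewrite -mulmxA sym3mx_adj_mul mul_mx_scalar; apply: eqmx_scale; rewrite expf_neq0.
Qed.

Lemma sym3mx_osc_plane a b c d u : a * d - b * c != 0 ->
  exists u', exists2 k, k != 0 & sym3mx a b c d *m (osc u)^T = k *: (osc u')^T.
Proof.
move=> det_neq0; rewrite oscE linearZ /= -scalemxAr sym3mx_osc.
have s_neq0 : (if u is Some _ then 1 else -1) != 0 :> F.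
  by case: u; rewrite ?oppr_eq0 oner_neq0.
move: s_neq0; set s := (if u is Some _ then _ else _) => s_neq0.
case: (cpt_coord u) (cpt_coord_neq0 u) => x y /=.
rewrite -adj_det in det_neq0 => /(lin_neq0 det_neq0).
have -> : x * d - y * b = d * x + - b * y by ring.
have -> : y * a - x * c = - c * x + a * y by ring.
case/osc_coef_osc => k k_neq0 ->; rewrite linearZ /= scalerA.
by exists (cpt_of (d * x + - b * y) (- c * x + a * y)), (s * k); rewrite ?mulf_neq0.
Qed.

End PointsOfC.

Section CollineationsOfC.
Variable F : finFieldType.
Implicit Types (a b c d k t : F) (u v w : option F).

Lemma poly_eq0_coef (s : seq F) : (size s <= #|F|)%N ->
  (forall t, (Poly s).[t] = 0) -> forall i, s`_i = 0.
Proof.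
move=> size_s s_eq0 i; rewrite -coef_Poly.
suff -> : Poly s = 0 by rewrite coef0.
apply: (@roots_geq_poly_eq0 _ _ (enum F)); last by rewrite -cardE (leq_trans (size_Poly _)).
  by apply/allP => t _; rewrite /root s_eq0.
exact: enum_uniq.
Qed.

Definition on_quadrics (v : 'rV[F]_4) : Prop :=
  v 0 i1 ^+ 2 - v 0 i0 * v 0 i2 = 0 /\ v 0 i2 ^+ 2 - v 0 i1 * v 0 i3 = 0.

Lemma cubic_pt_quadrics k x y : on_quadrics (k *: cubic_pt x y).
Proof. by rewrite /on_quadrics !mxE /=; split; ring. Qed.

Lemma sym3mx_quadrics k u a b c d : on_quadrics (k *: (cpt u *m sym3mx a b c d)).
Proof. by rewrite cptE cubic_pt_sym3mx; apply: cubic_pt_quadrics. Qed.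

Lemma cpt_None_mul (B : 'M[F]_4) : cpt None *m B = row i0 B.
Proof. by rowwise; ring. Qed.

Lemma cpt_Some0_mul (B : 'M[F]_4) : cpt (Some 0) *m B = row i3 B.
Proof. by rowwise; ring. Qed.

Lemma cpt_mul_neq0 (B : 'M[F]_4) u : B \in unitmx -> cpt u *m B != 0.
Proof. by move=> B_unit; rewrite mulmx_free_eq0 ?row_free_unit ?cpt_neq0. Qed.

Lemma diag_sym3mx (B : 'M[F]_4) : is_diag_mx B -> B i0 i0 != 0 -> B i1 i1 != 0 ->
    B i1 i1 ^+ 2 = B i0 i0 * B i2 i2 -> B i2 i2 ^+ 2 = B i1 i1 * B i3 i3 ->
  B = B i0 i0 *: sym3mx 1 0 0 (B i1 i1 / B i0 i0).
Proof.
move=> /is_diag_mxP B_diag B00_neq0 B11_neq0 B11sq B22sq.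
have B22E : B i2 i2 = B i1 i1 ^+ 2 / B i0 i0 by rewrite B11sq; field.
have B33E : B i3 i3 = B i2 i2 ^+ 2 / B i1 i1 by rewrite B22sq; field.
entrywise; try ring; try by rewrite B_diag //; ring.
- by field.
- by rewrite B22E; field.
- by rewrite B33E B22E; field; rewrite B00_neq0 B11_neq0.
Qed.

Lemma row0_fix_None (B : 'M[F]_4) : (cpt None *m B <= cpt None)%MS ->
  [/\ B i0 i1 = 0, B i0 i2 = 0 & B i0 i3 = 0].
Proof.
rewrite cpt_None_mul => /sub_rVP[l /rowP eB].
by move: (eB i1) (eB i2) (eB i3); rewrite !mxE /= !mulr0 => -> -> ->.
Qed.

Lemma row3_fix_Some0 (B : 'M[F]_4) : (cpt (Some 0) *m B <= cpt (Some 0))%MS ->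
  [/\ B i3 i0 = 0, B i3 i1 = 0 & B i3 i2 = 0].
Proof.
rewrite cpt_Some0_mul => /sub_rVP[m /rowP eB].
by move: (eB i0) (eB i1) (eB i2); rewrite !mxE /= !expr0n /= !mulr0 => -> -> ->.
Qed.

(* The coefficients of the two quadrics evaluated at cpt (Some t) *m B, which are
   polynomials of degree at most 5 in t. *)
Lemma quadrics_coefs (B : 'M[F]_4) : (6 <= #|F|)%N ->
    (cpt None *m B <= cpt None)%MS -> (cpt (Some 0) *m B <= cpt (Some 0))%MS ->
    (forall t, on_quadrics (cpt (Some t) *m B)) ->
  (forall i, [:: 0; 0; B i2 i1 ^+ 2 - B i2 i0 * B i2 i2;
    2%:R * B i1 i1 * B i2 i1 - B i1 i0 * B i2 i2 - B i2 i0 * B i1 i2;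
    B i1 i1 ^+ 2 - B i0 i0 * B i2 i2 - B i1 i0 * B i1 i2; - (B i0 i0 * B i1 i2)]`_i = 0)
  /\ (forall i, [:: 0; - (B i2 i1 * B i3 i3);
    B i2 i2 ^+ 2 - B i1 i1 * B i3 i3 - B i2 i1 * B i2 i3;
    2%:R * B i1 i2 * B i2 i2 - B i1 i1 * B i2 i3 - B i2 i1 * B i1 i3;
    B i1 i2 ^+ 2 - B i1 i1 * B i1 i3]`_i = 0).
Proof.
move=> cardF /row0_fix_None[B01 B02 B03] /row3_fix_Some0[B30 B31 B32] quadB.
split; apply: poly_eq0_coef => [|t]; rewrite ?(ltnW cardF) //.
- have [+ _] := quadB t; rewrite horner_Poly !mulmx4E !mxE /= ?B01 ?B02 ?B03 ?B30 ?B31 ?B32.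
  by move=> q; rewrite -[RHS]q; ring.
- have [_] := quadB t; rewrite horner_Poly !mulmx4E !mxE /= ?B01 ?B02 ?B03 ?B30 ?B31 ?B32.
  by move=> q; rewrite -[RHS]q; ring.
Qed.

Lemma quadrics_sym3mx (B : 'M[F]_4) : (6 <= #|F|)%N -> B \in unitmx ->
    (cpt None *m B <= cpt None)%MS -> (cpt (Some 0) *m B <= cpt (Some 0))%MS ->
    (forall t, on_quadrics (cpt (Some t) *m B)) ->
  exists l e, [/\ l != 0, e != 0 & B = l *: sym3mx 1 0 0 e].
Proof.
move=> cardF B_unit B_None B_Some0 quadB.
have [Q1 Q2] := quadrics_coefs cardF B_None B_Some0 quadB.
have [B01 B02 B03] := row0_fix_None B_None; have [B30 B31 B32] := row3_fix_Some0 B_Some0.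
have B00_neq0 : B i0 i0 != 0.
  apply: contraNneq (cpt_mul_neq0 None B_unit) => B00.
  by apply/eqP; rewrite cpt_None_mul; apply/rowP; apply: ord4_ind; rewrite !mxE.
have B33_neq0 : B i3 i3 != 0.
  apply: contraNneq (cpt_mul_neq0 (Some 0) B_unit) => B33.
  by apply/eqP; rewrite cpt_Some0_mul; apply/rowP; apply: ord4_ind; rewrite !mxE.
have B12 : B i1 i2 = 0.
  by move: (Q1 5%N) => /= /eqP; rewrite oppr_eq0 mulf_eq0 (negbTE B00_neq0) => /eqP.
have B21 : B i2 i1 = 0.
  by move: (Q2 1%N) => /= /eqP; rewrite oppr_eq0 mulf_eq0 (negbTE B33_neq0) orbF => /eqP.
have B11sq : B i1 i1 ^+ 2 = B i0 i0 * B i2 i2.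
  by apply/eqP; rewrite -subr_eq0; apply/eqP; rewrite -[RHS](Q1 4%N) /= B12; ring.
have B22sq : B i2 i2 ^+ 2 = B i1 i1 * B i3 i3.
  by apply/eqP; rewrite -subr_eq0; apply/eqP; rewrite -[RHS](Q2 2%N) /= B21; ring.
have B10B22 : B i1 i0 * B i2 i2 = 0.
  by apply: oppr_inj; rewrite oppr0 -[RHS](Q1 3%N) /= B12 B21; ring.
have B20B22 : B i2 i0 * B i2 i2 = 0.
  by apply: oppr_inj; rewrite oppr0 -[RHS](Q1 2%N) /= B21; ring.
have B11B13 : B i1 i1 * B i1 i3 = 0.
  by apply: oppr_inj; rewrite oppr0 -[RHS](Q2 4%N) /= B12; ring.
have B11B23 : B i1 i1 * B i2 i3 = 0.
  by apply: oppr_inj; rewrite oppr0 -[RHS](Q2 3%N) /= B12 B21; ring.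
have B11_neq0 : B i1 i1 != 0.
  apply/eqP => B11; have col1 : col i1 B = 0.
    by apply/colP; apply: ord4_ind; rewrite !mxE.
  have := mulKmx B_unit (delta_mx i1 (0 : 'I_1)); rewrite -colE col1 mulmx0 => /esym/eqP.
  by rewrite -mxrank_eq0 mxrank_delta.
have B22_neq0 : B i2 i2 != 0.
  apply: contraNneq B11_neq0 => B22.
  by move: B11sq; rewrite B22 mulr0 => /eqP; rewrite expf_eq0 => /andP[].
move/eqP: B10B22; move/eqP: B20B22.
rewrite !mulf_eq0 (negbTE B22_neq0) !orbF => /eqP B20 /eqP B10.
move/eqP: B11B13; move/eqP: B11B23.
rewrite !mulf_eq0 (negbTE B11_neq0) => /eqP B23 /eqP B13.
exists (B i0 i0), (B i1 i1 / B i0 i0); split => //.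
  by rewrite mulf_neq0 ?invr_eq0.
apply: diag_sym3mx => //; apply/is_diag_mxP.
by apply: ord4_ind; apply: ord4_ind => // _.
Qed.

Lemma inGq_cpt (A : 'M[F]_4) u : inGq A ->
  exists u', exists2 k, k != 0 & cpt u *m A = k *: cpt u'.
Proof.
case=> A_unit A_onto _; have [u' /andP[/sub_rVP[k eA] _]] := A_onto u.
exists u', k => //; apply: contraNneq (cpt_mul_neq0 u A_unit) => k0.
by rewrite eA k0 scale0r.
Qed.

Lemma unit_cpt_inj (A : 'M[F]_4) u v w k k' : A \in unitmx -> k' != 0 ->
  cpt u *m A = k *: cpt w -> cpt v *m A = k' *: cpt w -> u = v.
Proof.
move=> A_unit k'_neq0 eu ev; apply: cpt_submx_inj.
have A_free : row_free A by rewrite row_free_unit.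
by rewrite -(submxMfree _ _ A_free) eu ev (eqmx_scale _ k'_neq0) scalemx_sub.
Qed.

Lemma sym3mx_to_ends u v : u != v -> exists a b c d,
  [/\ a * d - b * c != 0, (cpt u *m sym3mx a b c d <= cpt None)%MS
    & (cpt v *m sym3mx a b c d <= cpt (Some 0))%MS].
Proof.
move=> u_neq_v; have := cpt_coord_cross_neq0 u_neq_v; rewrite (cptE u) (cptE v).
case: (cpt_coord u) (cpt_coord v) => [xu yu] [xv yv] /= cross_neq0.
exists yv, (- xv), yu, (- xu); rewrite !cubic_pt_sym3mx; split.
- by rewrite (_ : _ - _ = - (xu * yv - xv * yu)) ?oppr_eq0 //; ring.
- by apply/sub_rVP; exists ((yv * xu - xv * yu) ^+ 3); rowwise; ring.
- by apply/sub_rVP; exists ((yu * xv - xu * yv) ^+ 3); rowwise; ring.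
Qed.

Lemma inGq_sym3mx (A : 'M[F]_4) : (6 <= #|F|)%N -> inGq A ->
  exists a b c d k, [/\ a * d - b * c != 0, k != 0 & A = k *: sym3mx a b c d].
Proof.
move=> cardF Gq_A; have [A_unit _ _] := Gq_A.
have [ui [k1 k1_neq0 e1]] := inGq_cpt None Gq_A.
have [u0 [k2 k2_neq0 e2]] := inGq_cpt (Some 0) Gq_A.
have ui_neq_u0 : ui != u0.
  by apply/eqP => ui_u0; rewrite ui_u0 in e1; move: (unit_cpt_inj A_unit k2_neq0 e1 e2).
have [a [b [c [d [det_neq0 ui_end u0_end]]]]] := sym3mx_to_ends ui_neq_u0.
set M := sym3mx a b c d; set B := A *m M.
have B_unit : B \in unitmx by rewrite unitmx_mul A_unit sym3mx_unit.
have B_None : (cpt None *m B <= cpt None)%MS.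
  by rewrite mulmxA e1 -scalemxAl scalemx_sub.
have B_Some0 : (cpt (Some 0) *m B <= cpt (Some 0))%MS.
  by rewrite mulmxA e2 -scalemxAl scalemx_sub.
have B_quad t : on_quadrics (cpt (Some t) *m B).
  have [u [k _ e]] := inGq_cpt (Some t) Gq_A.
  by rewrite mulmxA e -scalemxAl; apply: sym3mx_quadrics.
have [l [e [l_neq0 e_neq0 eB]]] := quadrics_sym3mx cardF B_unit B_None B_Some0 B_quad.
have eA : A = (a * d - b * c) ^- 3 *: (B *m sym3mx d (- b) (- c) a).
  by rewrite -mulmxA sym3mx_mul_adj mul_mx_scalar scalerA mulVf ?scale1r ?expf_neq0.
rewrite eB -scalemxAl sym3mx_mul scalerA in eA.
exists (d * 1 + - b * 0), (d * 0 + - b * e), (- c * 1 + a * 0), (- c * 0 + a * e).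
exists ((a * d - b * c) ^- 3 * l); split => //; last by rewrite mulf_neq0 ?invr_eq0 ?expf_neq0.
by rewrite (_ : _ - _ = e * (a * d - b * c)) ?mulf_neq0 //; ring.
Qed.

End CollineationsOfC.

Section Lines.
Variable F : finFieldType.
Implicit Types (a b c d : F) (u w : option F) (L : 'M[F]_(2, 4)).

Local Notation P0 := (cpt (Some (0 : F))).

Lemma rank_col_mx_rV n (p v : 'rV[F]_n) :
  p != 0 -> ~~ (v <= p)%MS -> \rank (col_mx p v) = 2.
Proof.
move=> p_neq0 v_notin_p.
have : (p < col_mx p v)%MS by rewrite ltmxE -addsmxE addsmxSl col_mx_sub submx_refl.
move/rank_ltmx; rewrite rank_rV p_neq0 => rk.
by apply/eqP; rewrite eqn_leq rk rank_leq_row.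
Qed.

Lemma rank_col_mx_P0 (v : 'rV[F]_4) : v 0 i3 = 0 -> v != 0 -> \rank (col_mx P0 v) = 2.
Proof.
move=> v3 v_neq0; rewrite rank_col_mx_rV ?cpt_neq0 //.
apply: contra v_neq0 => /sub_rVP[k ev]; move: v3; rewrite ev !mxE /= mulr1 => ->.
by rewrite scale0r.
Qed.

Lemma UnGamma_cpt_exists L : UnGamma L -> exists u, (cpt u <= L)%MS.
Proof. by case=> _ /eqP/cards1P[u CL] _; exists u; have := set11 u; rewrite -CL inE. Qed.

Lemma UnGamma_cpt_eq L u w : UnGamma L -> (cpt u <= L)%MS -> (cpt w <= L)%MS -> u = w.
Proof.
case=> _ /eqP/cards1P[u0 CL] _.
have in_CL z : (cpt z <= L)%MS -> z = u0 by move=> zL; apply/set1P; rewrite -CL inE.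
by move=> /in_CL -> /in_CL ->.
Qed.

Lemma line_in_plane_sub m L (L' : 'M[F]_(m, 4)) (p : 'rV[F]_4) :
  (L <= L')%MS -> L' *m p^T = 0 -> line_in_plane L p.
Proof. by case/submxP => D -> L'p; rewrite /line_in_plane -mulmxA L'p mulmx0. Qed.

Lemma UnGamma_eqmx L L' : (L == L')%MS -> UnGamma L -> UnGamma L'.
Proof.
move=> /eqmxP eqLL' [L_line CL L_osc]; split.
- by rewrite /is_line -eqLL'.
- by rewrite -[RHS]CL; apply: eq_card => u; rewrite !inE eqLL'.
- by move=> u; apply: contra (L_osc u) => /eqP; apply: line_in_plane_sub; rewrite eqLL'.
Qed.

Lemma UnGamma_sym3mx a b c d L :
  a * d - b * c != 0 -> UnGamma L -> UnGamma (L *m sym3mx a b c d).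
Proof.
move=> det_neq0 [L_line CL L_osc].
have M_free : row_free (sym3mx a b c d) by rewrite row_free_unit sym3mx_unit.
have cpt_M u := eqmxP (cpt_sym3mx u det_neq0).
have moebius_inj : injective (moebius a b c d).
  move=> u w eq_uw; apply: cpt_submx_inj.
  by rewrite -(submxMfree _ _ M_free) cpt_M eq_uw -cpt_M.
have [g _ gK] := injF_bij moebius_inj.
split.
- by rewrite /is_line mxrankMfree.
- rewrite -[RHS]CL -[RHS](card_imset _ moebius_inj); apply: eq_card => u'.
  rewrite !inE -(gK u') mem_imset // inE.
  by rewrite -[RHS](submxMfree _ _ M_free) cpt_M.
- move=> u; have [u' [k k_neq0 eM]] := sym3mx_osc_plane u det_neq0.
  apply: contra (L_osc u'); rewrite /line_in_plane -mulmxA eM -scalemxAr.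
  by rewrite scalemx_eq0 (negbTE k_neq0).
Qed.

Lemma ell0E : ell0 F = col_mx P0 (vec4 1 0 1 0).
Proof.
apply/matrixP => i j; rewrite !mxE; case: splitP => k /=; rewrite ?ord1 !mxE.
  by move=> ->; rewrite !expr0n.
by move=> ->.
Qed.

Lemma rank_ell0 : \rank (ell0 F) = 2.
Proof.
rewrite ell0E rank_col_mx_P0 ?mxE //.
by apply/eqP => /rowP/(_ i0)/eqP; rewrite !mxE /= oner_eq0.
Qed.

Lemma sub_ell0 (v : 'rV[F]_4) : (v <= ell0 F)%MS -> v 0 i1 = 0 /\ v 0 i0 = v 0 i2.
Proof. by case/submxP => D ->; rewrite !mxE !big_ord_recl !big_ord0 !mxE /=; split; ring. Qed.

Lemma P0_ell0 : (P0 <= ell0 F)%MS.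
Proof. by rewrite ell0E (submx_trans (addsmxSl _ (vec4 1 0 1 0))) ?addsmxE. Qed.

(* The library lemmas on col_mx expect 1 + 1 rows where ell0 has 2, so they are
   instantiated explicitly. *)
Lemma ell0_mul n (N : 'M[F]_(4, n)) :
  ell0 F *m N = col_mx (P0 *m N) (vec4 1 0 1 0 *m N).
Proof. by rewrite ell0E; exact: (@mul_col_mx F 1 1 4 n P0 (vec4 1 0 1 0) N). Qed.

Lemma ell0_mul_sub m (N : 'M[F]_4) (L : 'M_(m, 4)) :
  (ell0 F *m N <= L)%MS = (P0 *m N <= L)%MS && (vec4 1 0 1 0 *m N <= L)%MS.
Proof. by rewrite ell0_mul; exact: (col_mx_sub (P0 *m N) (vec4 1 0 1 0 *m N) L). Qed.

Lemma ell0_mul_eq0 n (N : 'M[F]_(4, n)) :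
  (ell0 F *m N == 0) = (P0 *m N == 0) && (vec4 1 0 1 0 *m N == 0).
Proof. by rewrite ell0_mul; exact: (col_mx_eq0 (P0 *m N) (vec4 1 0 1 0 *m N)). Qed.

Lemma UnGamma_ell0 : UnGamma (ell0 F).
Proof.
split; first by rewrite /is_line rank_ell0.
- apply/eqP/cards1P; exists (Some 0); apply/setP => u; rewrite !inE.
  apply/idP/eqP => [/sub_ell0[] | ->]; last exact: P0_ell0.
  case: u => [t|]; rewrite !mxE /=.
  + by move=> /eqP; rewrite expf_eq0 /= => /eqP ->.
  + by move=> _ /eqP; rewrite oner_eq0.
- move=> u; rewrite /line_in_plane ell0_mul_eq0.
  apply/negP => /andP[/eqP/matrixP/(_ 0 0) + /eqP/matrixP/(_ 0 0)].
  case: u => [t|]; rewrite !mulmx4E !mxE /=.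
  + move=> /eqP; rewrite (_ : _ + _ = - t ^+ 3); last by ring.
    rewrite oppr_eq0 expf_eq0 /= => /eqP ->; apply/eqP.
    by rewrite (_ : _ + _ = 1) ?oner_eq0 //; ring.
  + by move=> /eqP; rewrite (_ : _ + _ = 1) ?oner_eq0 //; ring.
Qed.

Lemma UnGamma_inGq (A : 'M[F]_4) L :
  (6 <= #|F|)%N -> inGq A -> (L == ell0 F *m A)%MS -> UnGamma L.
Proof.
move=> cardF /(inGq_sym3mx cardF)[a [b [c [d [k [det_neq0 k_neq0 ->]]]]]] eqL.
apply: UnGamma_eqmx (UnGamma_sym3mx det_neq0 UnGamma_ell0).
apply/eqmxP; apply: eqmx_sym; apply: eqmx_trans (eqmxP eqL) _.
by rewrite -scalemxAr; apply: eqmx_scale.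
Qed.

End Lines.

Section EvenOrder.
Variable F : finFieldType.
Implicit Types (a b c d k : F) (u : option F) (L : 'M[F]_(2, 4)).

Local Notation P0 := (cpt (Some (0 : F))).

Lemma pchar2_even_card : ~~ odd #|F| -> 2 \in [pchar F].
Proof.
move=> F_even; have [p _ pcharFp] := finPcharP F.
have F_pnat : p.-nat #|F|.
  by have := abelem_pgroup (fin_ring_pchar_abelem pcharFp); rewrite /pgroup cardsT.
have : p.-nat 2 by apply: pnat_dvd F_pnat; rewrite dvdn2.
by rewrite pnatE // inE => /eqP ->.
Qed.

Hypothesis pchar2 : 2 \in [pchar F].

Lemma sqr_inj : injective (fun x : F => x ^+ 2).
Proof. exact: fmorph_inj (pFrobenius_aut pchar2). Qed.

Lemma sqr_surj z : exists x : F, x ^+ 2 = z.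
Proof. by have [g _ gK] := injF_bij sqr_inj; exists (g z); rewrite gK. Qed.

Lemma sym3mx_to_origin u :
  exists a b c d, a * d - b * c = 1 /\ cpt u *m sym3mx a b c d = P0.
Proof.
exists (cpt_coord u).2, (- (cpt_coord u).1), (1 - (cpt_coord u).2), (cpt_coord u).2.
by rewrite cptE cubic_pt_sym3mx; case: u => [t|] /=; split; try ring; rowwise; ring.
Qed.

Lemma UnGamma_P0_basis L : UnGamma L -> (P0 <= L)%MS ->
  exists v : 'rV_4, [/\ v 0 i3 = 0, v != 0 & (col_mx P0 v == L)%MS].
Proof.
move=> L_Un P0_L; have [/eqP L_rank _ _] := L_Un.
pose w i := row i L + (- row i L 0 i3) *: P0.
have [i wi_neq0 | w_eq0] := pickP (fun i => w i != 0).
  have wi3 : w i 0 i3 = 0 by rewrite !mxE /=; ring.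
  exists (w i); split => //; rewrite -(mxrank_leqif_eq _).2 ?rank_col_mx_P0 ?L_rank //.
  by rewrite col_mx_sub P0_L addmx_sub ?row_sub ?scalemx_sub.
have L_P0 : (L <= P0)%MS.
  apply/row_subP => i; move/negbFE: (w_eq0 i); rewrite addr_eq0 => /eqP ->.
  by rewrite -scaleNr scalemx_sub.
by have := mxrankS L_P0; rewrite L_rank rank_rV cpt_neq0.
Qed.

Lemma UnGamma_P0_v0_neq0 L (v : 'rV[F]_4) :
  UnGamma L -> (L <= col_mx P0 v)%MS -> v 0 i3 = 0 -> v 0 i0 != 0.
Proof.
case=> _ _ L_osc Lv v3; apply: contraNneq (L_osc (Some 0)) => v0.
apply: (line_in_plane_sub Lv); rewrite mul_col_mx; apply/eqP; rewrite col_mx_eq0.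
by apply/andP; split; apply/eqP/matrixP => i j; rewrite !ord1 mulmx4E !mxE /= ?v0 ?v3; ring.
Qed.

(* If delta = 0, then L meets C a second time: at P(1,0,0,0) if v1 = 0, and
   else at the point with parameter v0 / v1. *)
Lemma UnGamma_P0_delta_neq0 L (v : 'rV[F]_4) : UnGamma L -> (P0 <= L)%MS -> (v <= L)%MS ->
  v 0 i3 = 0 -> v 0 i0 != 0 -> v 0 i2 / v 0 i0 - (v 0 i1 / v 0 i0) ^+ 2 != 0.
Proof.
move=> L_Un P0_L v_L v3 v0_neq0; apply/eqP => /eqP; rewrite subr_eq0 => /eqP delta0.
have v2 : v 0 i2 = v 0 i1 ^+ 2 / v 0 i0.
  by rewrite -[v 0 i2](divfK v0_neq0) delta0; field.
have [v1 | v1_neq0] := eqVneq (v 0 i1) 0.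
  suff /(UnGamma_cpt_eq L_Un P0_L) : (cpt None <= L)%MS by [].
  rewrite (_ : cpt None = (v 0 i0)^-1 *: v) ?scalemx_sub //.
  by rowwise; rewrite ?v2 ?v1 ?v3; field.
suff /(UnGamma_cpt_eq L_Un P0_L) [] : (cpt (Some (v 0 i0 / v 0 i1)) <= L)%MS.
  by move/eqP; rewrite eq_sym mulf_eq0 invr_eq0 (negbTE v0_neq0) (negbTE v1_neq0).
rewrite (_ : cpt _ = ((v 0 i0 / v 0 i1) ^+ 3 / v 0 i0) *: v + P0).
  by rewrite addmx_sub ?scalemx_sub.
by rowwise; rewrite ?v2 ?v3; field; rewrite v0_neq0 v1_neq0.
Qed.

Lemma UnGamma_P0_ell0 L : UnGamma L -> (P0 <= L)%MS ->
  exists c d, d != 0 /\ (ell0 F *m sym3mx 1 0 c d == L)%MS.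
Proof.
move=> L_Un P0_L; have [v [v3 v_neq0 eqL]] := UnGamma_P0_basis L_Un P0_L.
have [/eqP L_rank _ _] := L_Un; have /andP[vL Lv] := eqL.
have {vL} v_L : (v <= L)%MS by move: vL; rewrite col_mx_sub => /andP[].
have v0_neq0 := UnGamma_P0_v0_neq0 L_Un Lv v3.
have [d d2] := sqr_surj (v 0 i2 / v 0 i0 - (v 0 i1 / v 0 i0) ^+ 2).
have d_neq0 : d != 0.
  apply: contraNneq (UnGamma_P0_delta_neq0 L_Un P0_L v_L v3 v0_neq0) => d0.
  by rewrite -d2 d0 expr0n.
set c := v 0 i1 / v 0 i0; exists c, d; split => //.
have N_free : row_free (sym3mx 1 0 c d).
  by rewrite row_free_unit sym3mx_unit // mul1r mul0r subr0.
rewrite -(mxrank_leqif_eq _).2 ?mxrankMfree ?rank_ell0 ?L_rank // ell0_mul_sub.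
apply/andP; split.
  rewrite (_ : P0 *m _ = d ^+ 3 *: P0) ?scalemx_sub //.
  by rewrite cptE cubic_pt_sym3mx; rowwise; ring.
rewrite (_ : _ *m _ = (v 0 i0)^-1 *: v + (c ^+ 3 + 3%:R * c * d ^+ 2) *: P0).
  by rewrite addmx_sub ?scalemx_sub.
by rowwise; rewrite ?v3 ?d2 /c; field.
Qed.

Lemma UnGamma_orbit L : UnGamma L -> exists2 A : 'M[F]_4, inGq A & (L == ell0 F *m A)%MS.
Proof.
move=> L_Un; have [u uL] := UnGamma_cpt_exists L_Un.
have [a [b [c [d [det1 eM]]]]] := sym3mx_to_origin u.
have det_neq0 : a * d - b * c != 0 by rewrite det1 oner_neq0.
have P0_LM : (P0 <= L *m sym3mx a b c d)%MS by rewrite -eM submxMr.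
have [c' [d' [d'_neq0 eqLM]]] := UnGamma_P0_ell0 (UnGamma_sym3mx det_neq0 L_Un) P0_LM.
exists (sym3mx 1 0 c' d' *m sym3mx d (- b) (- c) a).
  rewrite sym3mx_mul; apply: sym3mx_inGq.
  by rewrite det2_mul adj_det mul1r mul0r subr0 mulf_neq0.
apply/eqmxP; apply: eqmx_sym; rewrite mulmxA.
apply: eqmx_trans (eqmxMr _ (eqmxP eqLM)) _.
by rewrite -mulmxA sym3mx_mul_adj det1 expr1n mulmx1.
Qed.

Lemma sym3mx_stab_ell0 a b c d : (ell0 F *m sym3mx a b c d <= ell0 F)%MS ->
  a * d - b * c != 0 -> sym3mx a b c d = (a ^+ 3)%:M.
Proof.
rewrite ell0_mul_sub (_ : P0 *m _ = cubic_pt b d); last by rowwise; ring.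
rewrite (_ : vec4 1 0 1 0 *m _ = vec4 (a ^+ 3 + 3%:R * a * b ^+ 2)
  (a ^+ 2 * c + 2%:R * a * b * d + b ^+ 2 * c) (a * c ^+ 2 + a * d ^+ 2 + 2%:R * b * c * d)
  (c ^+ 3 + 3%:R * c * d ^+ 2)); last by rowwise; ring.
case/andP => /sub_ell0[+ +] /sub_ell0[+ +]; rewrite !mxE /= => bd b3 g1 g2 det_neq0.
have b0 : b = 0.
  have [//|b_neq0] := eqVneq b 0.
  have : b * (b ^+ 2 - d ^+ 2) = 0 by rewrite mulrBr -exprS b3 subrr.
  move/eqP; rewrite mulf_eq0 (negbTE b_neq0) subr_eq0 => /eqP /sqr_inj db.
  by move/eqP: bd; rewrite -db -exprSr expf_eq0 (negbTE b_neq0) andbF.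
rewrite b0 in det_neq0 g1 g2 *.
have a_neq0 : a != 0 by apply: contraNneq det_neq0 => ->; rewrite !mul0r subrr.
have c0 : c = 0.
  have : a ^+ 2 * c = 0 by rewrite -[RHS]g1; ring.
  by move/eqP; rewrite mulf_eq0 expf_eq0 (negbTE a_neq0) andbF => /eqP.
move/eqP: g2; rewrite -subr_eq0 c0 => /eqP g2.
have : a * (a ^+ 2 - d ^+ 2) = 0 by rewrite -[RHS]g2; ring.
move/eqP; rewrite mulf_eq0 (negbTE a_neq0) subr_eq0 => /eqP /sqr_inj ad.
by rewrite -ad sym3mx_scalar.
Qed.

Lemma sym3mx_conj_scalar (X : 'M[F]_4) a b c d s : a * d - b * c != 0 ->
  sym3mx a b c d *m X *m sym3mx d (- b) (- c) a = s%:M ->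
  X = (s / (a * d - b * c) ^+ 3)%:M.
Proof.
move=> det_neq0; have D_neq0 : (a * d - b * c) ^+ 3 != 0 by rewrite expf_neq0.
move/(congr1 (fun Y => sym3mx d (- b) (- c) a *m Y *m sym3mx a b c d)) => /=.
rewrite mul_mx_scalar -scalemxAl sym3mx_adj_mul scale_scalar_mx.
rewrite !mulmxA sym3mx_adj_mul mul_scalar_mx -!scalemxAl -mulmxA sym3mx_adj_mul.
rewrite mul_mx_scalar scalerA => eX; apply: (scalerI (mulf_neq0 D_neq0 D_neq0)).
by rewrite eX scale_scalar_mx; congr (_%:M); field.
Qed.

Lemma UnGamma_stabiliser L (A : 'M[F]_4) : (6 <= #|F|)%N ->
  UnGamma L -> inGq A -> (L *m A == L)%MS -> exists c, A = c%:M.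
Proof.
move=> cardF L_Un Gq_A LA.
have [A0 Gq_A0 eqL] := UnGamma_orbit L_Un.
have [a0 [b0 [c0 [d0 [k0 [det0_neq0 k0_neq0 eA0]]]]]] := inGq_sym3mx cardF Gq_A0.
have [a [b [c [d [k [det_neq0 k_neq0 eA]]]]]] := inGq_sym3mx cardF Gq_A.
rewrite eA0 in eqL; rewrite eA in LA *.
set M0 := sym3mx a0 b0 c0 d0; set M := sym3mx a b c d.
set N0 := sym3mx d0 (- b0) (- c0) a0.
have eL0 : (ell0 F *m M0 :=: L)%MS.
  apply: eqmx_trans (eqmx_sym (eqmx_scale _ k0_neq0)) _.
  by rewrite scalemxAr; apply/eqmx_sym/eqmxP.
have eLM : (L *m M :=: L)%MS.
  apply: eqmx_trans (eqmx_sym (eqmx_scale _ k_neq0)) _.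
  by rewrite scalemxAr; apply/eqmxP.
have fix_ell0 : (ell0 F *m (M0 *m M *m N0) <= ell0 F)%MS.
  rewrite !mulmxA (eqmxMr N0 (eqmx_trans (eqmxMr M eL0) (eqmx_trans eLM (eqmx_sym eL0)))).
  by rewrite -mulmxA sym3mx_mul_adj mul_mx_scalar scalemx_sub.
have [s eS] : exists s, M0 *m M *m N0 = s%:M.
  move: fix_ell0; rewrite /M0 /M /N0 !sym3mx_mul => fix_ell0.
  eexists; apply: (sym3mx_stab_ell0 fix_ell0).
  by rewrite !det2_mul adj_det !mulf_neq0.
exists (k * (s / (a0 * d0 - b0 * c0) ^+ 3)).
by rewrite (sym3mx_conj_scalar det0_neq0 eS) scale_scalar_mx.
Qed.

End EvenOrder.

Unset Implicit Arguments.

Theorem theorem6p5 (F : finFieldType) (hq8 : (8 <= #|F|)%N) (hqeven : ~~ odd #|F|) :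
  (forall L : 'M[F]_(2, 4),
      UnGamma L <-> exists2 A : 'M[F]_4, inGq A & (L == ell0 F *m A)%MS)
  /\
  (forall L : 'M[F]_(2, 4), UnGamma L ->
      forall A : 'M[F]_4, inGq A -> (L *m A == L)%MS ->
      exists c : F, A = c%:M).
Proof.
have cardF : (6 <= #|F|)%N by apply: leq_trans hq8.
have pchar2 := pchar2_even_card hqeven.
split=> [L | L L_Un A Gq_A]; last exact: (UnGamma_stabiliser pchar2 cardF L_Un Gq_A).
split; first exact: UnGamma_orbit.
by case=> A Gq_A; apply: UnGamma_inGq cardF Gq_A.
Qed.
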